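(* Let $T$ be a sequence of length $n$ over $\mathbb{A}$ and $I\subseteq\mathbb{A}$ a nonempty finite itemset. For every window length $x$ with $1\le x\le n$, $$\mathrm{co}(T,I,x)=(n-x+1)-\sum_{k=x}^{n}(k-x+1)\,H[k],$$ where $H[k]=\sum_{\emptyset\neq A\subseteq I}(-1)^{|A|+1}N_A(k)$.
   Context: A sequence $T=(T[0],\dots,T[n-1])$ has entries in $\mathbb{A}$. For $1\le x\le n$ and $x-1\le i\le n-1$ the window $\omega(i,x)$ is the contiguous block $(T[i-x+1],\dots,T[i])$. The co-occurrence count $\mathrm{co}(T,I,x)$ is the number of indices $i\in\{x-1,\dots,n-1\}$ such that every element of $I$ occurs in $\omega(i,x)$. For $A\subseteq I$ nonempty, a maximal $A$-gap is a contiguous block $T[s..t]$ with $0\le s\le t\le n-1$ such that $T[j]\notin A$ for all $s\le j\le t$, and ($s=0$ or $T[s-1]\in A$) and ($t=n-1$ or $T[t+1]\in A$); its length is $t-s+1$. $N_A(k)$ denotes the number of maximal $A$-gaps of length $k$ in $T$. *)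

From mathcomp Require Import all_boot all_order all_algebra.
From mathcomp Require Import finmap.
Set Implicit Arguments. Unset Strict Implicit. Unset Printing Implicit Defensive.
Import GRing.Theory Num.Theory.
Local Open Scope fset_scope.

Section Defs.
Variable Alph : choiceType.

(* window omega(i,x) = (T[i-x+1], ..., T[i]) (used for x-1 <= i <= n-1) *)
Definition window (T : seq Alph) (i x : nat) : seq Alph :=
  take x (drop (i.+1 - x) T).

Definition co (T : seq Alph) (I : {fset Alph}) (x : nat) : nat :=
  count (fun i => all (fun a => a \in window T i x) I)
        (iota x.-1 (size T - x.-1)).

(* T[j] \in A, for an index j < size T (false if out of range) *)
Definition inAt (T : seq Alph) (A : {fset Alph}) (j : nat) : bool :=
  if onth T j is Some a then a \in A else false.

Definition is_max_gap (T : seq Alph) (A : {fset Alph}) (s t : nat) : bool :=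
  [&& s <= t, t < size T,
      all (fun j => ~~ inAt T A j) (iota s (t - s).+1),
      (s == 0) || inAt T A s.-1
    & (t == (size T).-1) || inAt T A t.+1].

Definition N_gap (T : seq Alph) (A : {fset Alph}) (k : nat) : nat :=
  if k is 0 then 0 else
  count (fun s => is_max_gap T A s (s + k).-1) (iota 0 (size T)).

Definition Hcoef (T : seq Alph) (I : {fset Alph}) (k : nat) : int :=
  \sum_(A <- enum_fset (fpowerset I) | A != fset0)
     ((-1) ^+ (#|` A|.+1) * (N_gap T A k)%:Z)%R.
End Defs.

From mathcomp Require Import all_boot all_order all_algebra.
From mathcomp Require Import finmap zify.
Import GRing.Theory Num.Theory.

(* For a single window w, "I is covered by w" is, by inclusion-exclusion
   over the nonempty subsets A of I, 1 - sum_A (-1)^(|A|+1) [w avoids A]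
   (covers_IE, from the expansion prod_(a in I) (1 - g a) of
   prod_1B_fpowerset).  Summing over the n - x + 1 windows of length x gives
   co(T,I,x) = (n - x + 1) - sum_A (-1)^(|A|+1) * #{windows avoiding A}
   (co_by_avoiding).

   It remains to count the windows avoiding a fixed A.  Marking each entry
   of T by whether it lies in A, such a window is a run of x unmarked
   entries; each lies in exactly one maximal A-gap, and a gap of length k
   contains k - x + 1 of them.  Regrouping the resulting double
   sum by gap length yields the coefficients H[k] (weighted_Hcoef). *)

Section LeadingGap.

Implicit Types (c : seq bool) (x : nat).

Fixpoint lead_gap c : nat :=
  if c is b :: c' then (if b then 0 else (lead_gap c').+1) else 0.

Lemma lead_gap_le c : lead_gap c <= size c.
Proof. by elim: c => [|[] c IH] //=. Qed.

Lemma nth_lead_gap c j : j < lead_gap c -> nth false c j = false.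
Proof. by elim: c j => [|[] c IH] [|j] //= /IH. Qed.

Lemma nth_lead_gap_end c : lead_gap c < size c -> nth false c (lead_gap c).
Proof. by elim: c => [|[] c IH] //=. Qed.

Lemma lead_gapP c k : (k == lead_gap c) = [&& k <= size c,
   all (fun j => ~~ nth false c j) (iota 0 k) & (k == size c) || nth false c k].
Proof.
apply/eqP/and3P => [->|[ks /allP unmarked endk]].
  split; first exact: lead_gap_le.
    by apply/allP => j; rewrite mem_iota /= => /nth_lead_gap ->.
  by case: ltngtP (lead_gap_le c) => // lt _; rewrite nth_lead_gap_end ?orbT.
case: (ltngtP k (lead_gap c)) => // lt.
  by move: endk; rewrite nth_lead_gap // orbF => /eqP ek; move: (lead_gap_le c); lia.
have /nth_lead_gap_end : lead_gap c < size c by lia.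
by have := unmarked (lead_gap c); rewrite mem_iota /= lt => /(_ isT) /negbTE ->.
Qed.

Lemma all_negb_take c x : x <= size c -> all negb (take x c) = (x <= lead_gap c).
Proof. by elim: c x => [|[] c IH] [|x] //= /IH. Qed.

(* Number of suffixes of c starting with at least x unmarked entries, i.e.
   number of unmarked windows of length x (for x > 0). *)
Fixpoint free_windows x c : nat :=
  if c is _ :: c' then (x <= lead_gap c) + free_windows x c' else 0.

(* Sum, over the maximal gaps of c, of the number (gap length + 1 - x) of
   windows of length x they contain; prev is the mark preceding c. *)
Fixpoint gap_windows x (prev : bool) c : nat :=
  if c is b :: c' then
    (if prev && ~~ b then (lead_gap c).+1 - x else 0) + gap_windows x b c'
  else 0.

(* Every unmarked window lies in exactly one maximal gap, and a gap of
   length L contains L + 1 - x windows of length x. *)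
Lemma free_windows_by_gaps x c : 0 < x -> gap_windows x true c = free_windows x c.
Proof.
move=> x_gt0.
suff [] : gap_windows x true c = free_windows x c /\
          gap_windows x false c + ((lead_gap c).+1 - x) = free_windows x c by [].
elim: c => [|[] c [IHtrue IHfalse]] /=; first by split; lia.
  by rewrite IHtrue; split; lia.
lia.
Qed.

Lemma free_windowsE x c : 0 < x ->
  free_windows x c = count (fun p => all negb (take x (drop p c)))
                           (iota 0 ((size c).+1 - x)).
Proof.
move=> x_gt0; elim: c => [|b c IH] /=; first by have -> : 1 - x = 0 by lia.
case: (leqP x (size c).+1) => xs.
  have -> : (size c).+2 - x = ((size c).+1 - x).+1 by lia.
  rewrite /= (@all_negb_take (b :: c) x xs) IH (iotaDl 1 0) count_map.
  by congr (_ + _); apply: eq_count.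
have -> : (size c).+2 - x = 0 by lia.
rewrite IH; have -> : (size c).+1 - x = 0 by lia.
by have := lead_gap_le (b :: c); case: b => /=; lia.
Qed.

Definition gap_start (prev : bool) c s : bool :=
  ~~ nth false c s && (if s is s'.+1 then nth false c s' else prev).

Lemma gap_windowsE x prev c : gap_windows x prev c =
  \sum_(0 <= s < size c)
     (if gap_start prev c s then (lead_gap (drop s c)).+1 - x else 0).
Proof.
elim: c prev => [|b c IH] prev; first by rewrite big_geq.
rewrite /= big_nat_recl // IH /gap_start /= andbC; congr (_ + _).
by apply: eq_bigr => -[|s] _.
Qed.

End LeadingGap.

(* Only the term k = L survives: it contributes L - x + 1 if x <= L. *)
Lemma sum_weight_eq x n L : L <= n ->
  \sum_(x <= k < n.+1) (k - x + 1) * (k == L) = L.+1 - x.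
Proof.
move=> Ln; case: (leqP x L) => xL.
  rewrite (bigD1_seq L) ?iota_uniq //=; last by rewrite mem_index_iota; lia.
  by rewrite eqxx muln1 big1 ?addn0 => [|k /negbTE ->]; lia.
rewrite big_seq big1 => [|k]; first by lia.
rewrite mem_index_iota => /andP[xk _].
by case: eqP => [kL|]; [lia | rewrite muln0].
Qed.

Definition avoiding_windows {Alph : choiceType} (T : seq Alph) (A : {fset Alph})
    (x : nat) : nat :=
  count (fun i => all (fun a => a \notin A) (window T i x)) (iota x.-1 (size T - x.-1)).

Section MaximalGaps.
Variables (Alph : choiceType) (T : seq Alph) (A : {fset Alph}).

Let marks := [seq a \in A | a <- T].

Lemma size_marks : size marks = size T. Proof. exact: size_map. Qed.

Lemma inAtE j : inAt T A j = nth false marks j.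
Proof. by rewrite /inAt /marks; elim: T j => [|a s IH] [|j] //=. Qed.

Lemma all_unmarked_drop s m :
  all (fun j => ~~ nth false (drop s marks) j) (iota 0 m) =
  all (fun j => ~~ inAt T A j) (iota s m).
Proof.
rewrite -(addn0 s) iotaDl all_map addn0.
by apply: eq_all => j /=; rewrite nth_drop inAtE.
Qed.

Lemma max_gapE s k : 0 < k -> is_max_gap T A s (s + k).-1 =
  [&& s < size T, gap_start true marks s & k == lead_gap (drop s marks)].
Proof.
case: k => // k _; rewrite /is_max_gap /gap_start lead_gapP all_unmarked_drop.
rewrite size_drop size_marks nth_drop -!inAtE addnS /= addKn.
have -> : (s <= s + k) = true by lia.
case: (ltnP (s + k) (size T)) => lt /=; last by case: (s < size T); lia.
have -> : (s < size T) = true by lia.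
have -> : (k < size T - s) = true by lia.
have -> : (s + k == (size T).-1) = (k.+1 == size T - s) by lia.
have -> : ((s == 0) || inAt T A s.-1) = (if s is s'.+1 then nth false marks s' else true).
  by case: s {lt} => //= s; rewrite inAtE.
rewrite /=; case: (~~ inAt T A s) (if s is _.+1 then _ else _) (all _ _) => [] [] [] //=.
Qed.

Lemma N_gapE k : 0 < k -> N_gap T A k =
  \sum_(0 <= s < size T) (gap_start true marks s && (k == lead_gap (drop s marks))).
Proof.
case: k => // k _; rewrite /N_gap -sum1_count big_mkcond [in RHS]/index_iota subn0.
rewrite !big_seq; apply: eq_bigr => s; rewrite mem_iota => /andP[_ sT].
by rewrite max_gapE // sT.
Qed.

Lemma avoiding_windowsE x : 0 < x ->
  avoiding_windows T A x = free_windows x marks.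
Proof.
move=> x_gt0; rewrite /avoiding_windows free_windowsE // size_marks.
have -> : size T - x.-1 = (size T).+1 - x by lia.
rewrite -[x.-1]addn0 iotaDl count_map; apply: eq_count => p /=.
rewrite /window -map_drop -map_take all_map.
by have -> : (x.-1 + p).+1 - x = p by lia.
Qed.

Lemma weighted_gap_count x : 0 < x ->
  \sum_(x <= k < (size T).+1) (k - x + 1) * N_gap T A k = gap_windows x true marks.
Proof.
move=> x_gt0; rewrite gap_windowsE size_marks.
rewrite big_seq; under eq_bigr => k.
  rewrite mem_index_iota => /andP[xk _].
  rewrite N_gapE ?(leq_trans x_gt0 xk) // big_distrr.
  over.
rewrite -big_seq exchange_big /=; apply: eq_big_nat => s /andP[_ sT].
case: (gap_start true marks s) => /=; last by rewrite big1 // => k _; rewrite muln0.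
apply: sum_weight_eq; apply: leq_trans (lead_gap_le _) _.
by rewrite size_drop size_marks leq_subr.
Qed.

Lemma avoiding_windows_by_gaps x : 0 < x ->
  avoiding_windows T A x = \sum_(x <= k < (size T).+1) (k - x + 1) * N_gap T A k.
Proof.
by move=> x_gt0; rewrite avoiding_windowsE // -free_windows_by_gaps // weighted_gap_count.
Qed.
End MaximalGaps.

Local Open Scope fset_scope.
Local Open Scope ring_scope.

Section InclusionExclusion.
Variable K : choiceType.

Lemma sum_fpowersetU1 (R : nmodType) (F : {fset K} -> R) x X : x \notin X ->
  \sum_(B <- fpowerset (x |` X)) F B =
  \sum_(B <- fpowerset X) F B + \sum_(B <- fpowerset X) F (x |` B).
Proof.
move=> xX; have notin_sub B : B `<=` X -> x \notin B.
  by move=> /fsubsetP sBX; apply: contra xX => /sBX.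
have lowerE : [fset B in fpowerset (x |` X) | x \notin B] = fpowerset X.
  apply/fsetP => B; rewrite !inE /= !fpowersetE.
  apply/andP/idP => [[/fsubsetP sB xB]|sBX]; last first.
    by split; [apply: fsubset_trans sBX (fsubsetU1 _ _) | exact: notin_sub].
  apply/fsubsetP => y yB; have := sB y yB; rewrite !inE.
  by case: eqP => [yx|] //=; move: xB; rewrite -yx yB.
have upperE : [fset B in fpowerset (x |` X) | ~~ (x \notin B)] =
              [fset x |` B | B in fpowerset X].
  apply/fsetP => B; rewrite !inE /= fpowersetE negbK.
  apply/andP/imfsetP => [[/fsubsetP sB xB]|[B' /= B'X ->]].
    exists (B `\ x); last by rewrite fsetD1K.
    rewrite /= fpowersetE; apply/fsubsetP => y; rewrite !inE => /andP[yx /sB].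
    by rewrite !inE (negbTE yx).
  split; last by rewrite !inE eqxx.
  by rewrite fpowersetE in B'X; rewrite fsetUS.
rewrite (big_fsetID _ (fun B : {fset K} => x \notin B)) /= lowerE upperE.
rewrite (big_imfset _ _ (h := fun B => x |` B)) //=.
move=> B1 B2; rewrite !fpowersetE => /notin_sub x1 /notin_sub x2 /= e.
by rewrite -(fsetU1K x1) e fsetU1K.
Qed.

Lemma prod_1B_fpowerset (R : comNzRingType) (S : {fset K}) (g : K -> R) :
  \prod_(a <- S) (1 - g a) =
  \sum_(B <- fpowerset S) (-1) ^+ #|` B| * \prod_(a <- B) g a.
Proof.
elim/fset1U_rect: S => [|x X xX IH].
  by rewrite fpowerset0 big_seq_fset1 !big_seq_fset0 cardfs0 mulr1.
rewrite big_fsetU1 //= IH sum_fpowersetU1 // mulrBl mul1r; congr (_ + _).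
rewrite mulr_sumr -sumrN big_seq [RHS]big_seq; apply: eq_bigr => B.
rewrite fpowersetE => /fsubsetP sBX.
have xB : x \notin B by apply: contra xX => /sBX.
rewrite cardfsU1 xB big_fsetU1 // add1n exprS.
by rewrite /= mulN1r mulNr mulrCA.
Qed.

Lemma prod_nat_all (s : seq K) (P : pred K) :
  \prod_(a <- s) (P a)%:Z = (all P s)%:Z.
Proof.
by elim: s => [|a s IH]; rewrite ?big_nil ?big_cons //= IH; case: (P a); case: (all P s).
Qed.

Lemma covers_IE (I : {fset K}) (w : seq K) :
  (all (fun a => a \in w) I)%:Z = 1 -
  \sum_(A <- fpowerset I | A != fset0)
     (-1) ^+ (#|` A|.+1) * (all (fun a => a \notin A) w)%:Z.
Proof.
have -> : (all (fun a => a \in w) I)%:Z = \prod_(a <- I) (1 - (a \notin w)%:Z).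
  by rewrite -prod_nat_all; apply: eq_bigr => a _; case: (a \in w).
rewrite prod_1B_fpowerset (bigD1_seq fset0) ?fset_uniq ?fpowersetE ?fsub0set //=.
rewrite big_nil mulr1 -sumrN; congr (_ + _); apply: eq_bigr => A _.
have -> : all (fun a => a \notin A) w = all (fun a => a \notin w) A.
  by rewrite (@all_predC _ (mem A)) has_sym all_predC.
by rewrite prod_nat_all exprS mulN1r mulNr opprK.
Qed.

End InclusionExclusion.

Section CoOccurrence.
Variables (Alph : choiceType) (T : seq Alph) (I : {fset Alph}).

Lemma co_by_avoiding x : (co T I x)%:Z = (size T - x.-1)%:Z -
  \sum_(A <- fpowerset I | A != fset0)
     (-1) ^+ (#|` A|.+1) * (avoiding_windows T A x)%:Z.
Proof.
rewrite /co -sum1_count big_mkcond raddf_sum /=.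
under eq_bigr => i _ do rewrite -[(if _ then _ else _)%:Z]/((all _ I)%:Z) covers_IE.
rewrite sumrB -/(index_iota x.-1 (size T)) sumr_const_nat natz; congr (_ - _).
rewrite exchange_big /=; apply: eq_big => // A _; rewrite -mulr_sumr.
rewrite /avoiding_windows -sum1_count raddf_sum [in RHS]big_mkcond /=.
by congr (_ * _); apply: eq_bigr => i _; case: all.
Qed.

Lemma weighted_Hcoef x : (0 < x)%N ->
  \sum_(x <= k < (size T).+1) ((k - x + 1)%:Z * Hcoef T I k) =
  \sum_(A <- fpowerset I | A != fset0)
     (-1) ^+ (#|` A|.+1) * (avoiding_windows T A x)%:Z.
Proof.
move=> x_gt0; rewrite /Hcoef; under eq_bigr => k _ do rewrite mulr_sumr.
rewrite exchange_big /=; apply: eq_bigr => A _.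
rewrite avoiding_windows_by_gaps // raddf_sum mulr_sumr; apply: eq_bigr => k _.
by rewrite /= PoszM mulrCA.
Qed.
End CoOccurrence.

Theorem mainTheorem2 (Alph : choiceType) (T : seq Alph) (I : {fset Alph})
  (x : nat) :
  I != fset0 -> (1 <= x)%N -> (x <= size T)%N ->
  (co T I x)%:Z =
    (size T - x + 1)%:Z
    - \sum_(x <= k < (size T).+1) ((k - x + 1)%:Z * Hcoef T I k).
Proof.
move=> _ x_gt0 xn; rewrite co_by_avoiding weighted_Hcoef //.
by congr (_%:Z - _); lia.
Qed.
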